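(* Let $I=(a_1,\dots,a_n)\in(0,1]^n$ be a sorted item sequence, and let $f$ be the assignment produced by $MM_2$ on $I$ (items indexed by their position in $I$). Suppose $f$ has at least one bin containing a sole class-1 item, and let $p$ be the maximum index of such sole class-1 items in $f$. Let $U$ be the set of indices of items (other than $1,\dots,p$) that share a bin with one of the items $1,2,\dots,p$ in $f$ (possibly $U=\emptyset$). Then for any assignment $g$ of $I$ without cardinality constraints, letting $W$ be the set of indices of items (other than $1,\dots,p$) that share a bin with one of the items $1,2,\dots,p$ in $g$, we have $W\subseteq U$.
   Context: An item sequence $I=(a_1,\dots,a_n)\in(0,1]^n$ is sorted if $a_1\ge\cdots\ge a_n$. An assignment without cardinality constraints is a map $g:\{1,\dots,n\}\to\mathbb{N}$ with $\sum_{i:g(i)=j}a_i\le1$ for each bin $j$. A class-1 item is an item of size in $(\frac12,1]$; an item is sole if its bin contains no other item. Algorithm $MM_k$ ($k$-cardinality constrained version of $MM$): sort the items in non-increasing order (on an already sorted input this leaves the order, hence the indices, unchanged); keep a single open bin with load $S$. Repeat while items remain: if the open bin already contains $k$ items, close it and open a new bin; else if the head (largest remaining) item fits ($S+\text{head}\le1$) pack it; else if the tail (smallest remaining) item fits pack it; else close the open bin permanently and open a new empty bin. $MM_2$ is the case $k=2$. *)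

From HB Require Import structures.
From mathcomp Require Import all_boot all_order all_algebra.
Set Implicit Arguments. Unset Strict Implicit. Unset Printing Implicit Defensive.
Import Order.TTheory GRing.Theory Num.Theory.
Local Open Scope ring_scope.

(* Items are indexed 0 .. n-1 (position in the sequence s); bins are nats. *)

Section MM.
Variable R : realFieldType.

Definition item (s : seq R) (i : nat) : R := nth 0 s i.

Definition valid_items (s : seq R) : bool := all (fun x => (0 < x) && (x <= 1)) s.

Definition sorted_items (s : seq R) : bool := sorted (fun x y => y <= x) s.

Definition is_assignment (s : seq R) (g : nat -> nat) : Prop :=
  forall j : nat, \sum_(i < size s | g i == j) item s i <= 1.

Definition upd (f : nat -> nat) (i b : nat) : nat -> nat :=
  fun x => if x == i then b else f x.

(* One run of MM_k on an already sorted input (sorting leaves indices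
   unchanged).  Remaining items are the indices lo .. hi-1 (head = lo,
   tail = hi-1); b = current open bin, c = number of items in it,
   S = its load. *)
Fixpoint mm_run (k : nat) (s : seq R) (fuel lo hi b c : nat) (S : R)
    (f : nat -> nat) : nat -> nat :=
  match fuel with
  | 0%N => f
  | fuel'.+1 =>
    if (hi <= lo)%N then f
    else if c == k then mm_run k s fuel' lo hi b.+1 0 0 f
    else if S + item s lo <= 1 then
      mm_run k s fuel' lo.+1 hi b c.+1 (S + item s lo) (upd f lo b)
    else if S + item s hi.-1 <= 1 then
      mm_run k s fuel' lo hi.-1 b c.+1 (S + item s hi.-1) (upd f hi.-1 b)
    else mm_run k s fuel' lo hi b.+1 0 0 f
  end.

(* Assignment produced by MM_k.  Fuel 2n+1 suffices for k >= 1 since every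
   step packs an item or closes a nonempty bin. *)
Definition MM (k : nat) (s : seq R) : nat -> nat :=
  mm_run k s (2 * size s).+1 0 (size s) 0 0 0 (fun _ => 0%N).

Definition class1 (s : seq R) (i : nat) : bool := 1 / 2 < item s i.

Definition sole (s : seq R) (f : nat -> nat) (i : nat) : Prop :=
  forall i', (i' < size s)%N -> i' <> i -> f i' <> f i.

Definition partners (s : seq R) (f : nat -> nat) (p u : nat) : Prop :=
  (p < u < size s)%N /\ exists i, (i <= p)%N /\ f u = f i.

End MM.

From HB Require Import structures.
From mathcomp Require Import all_boot all_order all_algebra.
From mathcomp Require Import zify.
Import Order.TTheory GRing.Theory Num.Theory.
Local Open Scope ring_scope.

(* If w shares a bin with some i <= p in an assignment, then a_p + a_w <= a_i + a_w <= 1.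
   The argument works for MM_k with any k >= 2.  Every bin of MM_k is opened by a head
   item, so as long as the head has not passed p, a tail item is only ever packed next
   to an item of index < p; hence if w is packed before the head reaches p, it shares a
   bin with an item <= p.  Otherwise, when p is packed, either the open bin is nonempty
   and p joins an earlier item, or p opens a bin and the next step packs the head or
   the tail with p: the tail fits, as it is no larger than a_w. *)

Section Items.
Variables (R : realFieldType) (s : seq R).

Lemma item_antitone i j :
  sorted_items s -> (i <= j)%N -> (j < size s)%N -> item s j <= item s i.
Proof.
move=> s_sorted le_ij j_lt.
have ge_trans : transitive (fun x y : R => y <= x).
  by move=> x y z yx zy; apply: le_trans zy yx.
by apply: (sorted_leq_nth ge_trans (@lexx _ _) 0 s_sorted); rewrite ?inE //; lia.
Qed.

Hypothesis s_valid : valid_items s.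

Lemma item_gt0 i : (i < size s)%N -> 0 < item s i.
Proof. by move=> lt_i; move/all_nthP: s_valid => /(_ 0 i lt_i) /andP[]. Qed.

Lemma item_le1 i : (i < size s)%N -> item s i <= 1.
Proof. by move=> lt_i; move/all_nthP: s_valid => /(_ 0 i lt_i) /andP[]. Qed.

Lemma assignment_pair_fits g i j :
  is_assignment s g -> (i < size s)%N -> (j < size s)%N -> i != j -> g i = g j ->
  item s i + item s j <= 1.
Proof.
move=> g_asg lt_i lt_j neq_ij g_ij; apply: le_trans (g_asg (g j)).
rewrite (bigD1 (Ordinal lt_j)) ?eqxx //= (bigD1 (Ordinal lt_i)) /=; last first.
  by rewrite g_ij eqxx -val_eqE /= neq_ij.
rewrite addrA [item s j + _]addrC lerDl sumr_ge0 // => m _.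
exact/ltW/item_gt0.
Qed.

End Items.

Section MMRun.
Variables (R : realFieldType) (s : seq R) (k : nat).

Lemma mm_run_out fuel lo hi b c S f x :
  (x < lo)%N || (hi <= x)%N -> mm_run k s fuel lo hi b c S f x = f x.
Proof.
elim: fuel lo hi b c S f => [|fuel IH] lo hi b c S f x_out //=.
case: ifP => // /negbT hi_gt_lo.
case: ifP => _; first exact: IH.
case: ifP => _.
  by rewrite IH ?/upd; [case: eqP => // x_lo; lia | lia].
case: ifP => _; last exact: IH.
by rewrite IH ?/upd; [case: eqP => // x_hi; lia | lia].
Qed.

Lemma mm_run_upd_same_bin fuel lo hi b' c S f x y b :
  (x < lo)%N || (hi <= x)%N -> (y < lo)%N || (hi <= y)%N -> f y = b ->
  mm_run k s fuel lo hi b' c S (upd f x b) x = mm_run k s fuel lo hi b' c S (upd f x b) y.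
Proof. by move=> x_out y_out f_y; rewrite !mm_run_out // /upd eqxx; case: ifP. Qed.

Hypothesis k_gt1 : (1 < k)%N.
Hypotheses (s_valid : valid_items s) (s_sorted : sorted_items s).
Variables p w : nat.
Hypotheses (p_lt_w : (p < w)%N) (w_lt_size : (w < size s)%N).
Hypothesis pw_fit : item s p + item s w <= 1.

Lemma mm_run_opened_not_sole fuel hi b f :
  (0 < fuel)%N -> (w < hi)%N -> (hi <= size s)%N -> f p = b ->
  ~ sole s (mm_run k s fuel p.+1 hi b 1 (item s p) f) p.
Proof.
case: fuel => [//|fuel] _ w_lt_hi hi_le f_p /=.
have -> : (hi <= p.+1)%N = false by lia.
have -> : (1 == k) = false by lia.
case: ifP => [_ | head_misfit] p_sole.
  apply: (p_sole p.+1); try lia.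
  by apply: mm_run_upd_same_bin => //; lia.
case: ifP p_sole => [_ | tail_misfit] p_sole.
  apply: (p_sole hi.-1); try lia.
  by apply: mm_run_upd_same_bin => //; lia.
have tail_le_w : item s hi.-1 <= item s w by apply: item_antitone; lia.
by move: tail_misfit; rewrite (le_trans _ pw_fit) // lerD2l.
Qed.

Lemma mm_run_partner_or_not_sole fuel lo hi b c S f :
  (lo <= p)%N -> (w < hi)%N -> (hi <= size s)%N ->
  (c = 0%N -> S = 0) -> (c != 0%N -> exists2 j, (j < lo)%N & f j = b) ->
  (2 * (hi - lo) + (c != 0%N) <= fuel)%N ->
  ~ sole s (mm_run k s fuel lo hi b c S f) p \/
  exists2 i, (i <= p)%N & mm_run k s fuel lo hi b c S f w = mm_run k s fuel lo hi b c S f i.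
Proof.
elim: fuel lo hi b c S f => [|fuel IH] lo hi b c S f lo_le_p w_lt_hi hi_le S0 opener fuel_ge.
  lia.
rewrite /=; have -> : (hi <= lo)%N = false by lia.
case: (c =P k) => [c_k | _]; first by apply: IH => //; lia.
case: ifP => head_fit.
  have [lo_lt_p | lo_p] : (lo < p)%N \/ lo = p by lia.
    apply: IH => //; try lia.
    by exists lo; rewrite /upd ?eqxx.
  subst lo; have [c0 | c_gt0] := posnP c.
    subst c; rewrite S0 // add0r; left; apply: mm_run_opened_not_sole; try lia.
    by rewrite /upd eqxx.
  have [j j_lt f_j] := opener (lt0n_neq0 c_gt0).
  left=> p_sole; apply: (p_sole j); try lia.
  by symmetry; apply: mm_run_upd_same_bin => //; lia.
have c_neq0 : c != 0%N.
  apply: contraFN head_fit => /eqP c0.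
  by rewrite S0 // add0r item_le1 //; lia.
have [j j_lt f_j] := opener c_neq0.
case: ifP => tail_fit; last by apply: IH => //; lia.
have [w_tail | w_lt_tail] : w = hi.-1 \/ (w < hi.-1)%N by lia.
  right; exists j; first lia.
  by rewrite w_tail; apply: mm_run_upd_same_bin => //; lia.
apply: IH => //; try lia.
by exists j; rewrite // /upd ifN //; apply/eqP; lia.
Qed.

Lemma MM_partner_or_not_sole :
  ~ sole s (MM k s) p \/ exists2 i, (i <= p)%N & MM k s w = MM k s i.
Proof. by apply: mm_run_partner_or_not_sole => //; lia. Qed.

End MMRun.

Theorem lemma1 (R : realFieldType) (s : seq R) (p : nat) :
  valid_items s -> sorted_items s ->
  (* p is the maximum index of a sole class-1 item of f = MM_2(s) *)
  (p < size s)%N -> class1 s p -> sole s (MM 2 s) p ->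
  (forall i, (i < size s)%N -> class1 s i -> sole s (MM 2 s) i -> (i <= p)%N) ->
  forall g : nat -> nat, is_assignment s g ->
  forall w, partners s g p w -> partners s (MM 2 s) p w.
Proof.
move=> s_valid s_sorted _ _ p_sole _ g g_asg w [/andP[p_lt_w w_lt] [i [i_le_p g_wi]]].
have iw_fit : item s i + item s w <= 1.
  by rewrite addrC; apply: assignment_pair_fits => //; lia.
have pw_fit : item s p + item s w <= 1.
  by apply: le_trans iw_fit; rewrite lerD2r item_antitone //; lia.
split; first by rewrite p_lt_w.
have [//|[j j_le_p MM_wj]] :=
  @MM_partner_or_not_sole R s 2 isT s_valid s_sorted p w p_lt_w w_lt pw_fit.
by exists j.
Qed.
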